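(* $$\sum_{k=1}^\infty \frac{1}{2^{k+1}(2k-1)k(2k+1)}=\frac{3}{2\sqrt2}\ln(1+\sqrt2)-\frac12(\ln 2+1),$$ $$\sum_{k=1}^\infty \frac{1}{2^{k+2}(2k-1)k^2(2k+1)}=\frac12+\frac18\ln^2 2-\frac{\pi^2}{48}-\frac{1}{2\sqrt2}\ln(1+\sqrt2),$$ $$\sum_{k=1}^\infty \frac{1}{2^{k+3}(2k-1)k^3(2k+1)}=\frac{3}{2\sqrt2}\ln(1+\sqrt2)+\frac{\pi^2\ln 2}{96}-\frac12(\ln 2+1)-\frac{\ln^3 2}{48}-\frac{7}{64}\zeta(3).$$
   Context: $\zeta$ is the Riemann zeta function. *)

From Stdlib Require Import Reals.
From Coquelicot Require Import Coquelicot.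
Open Scope R_scope.

Definition zeta3 : R := Series (fun n : nat => 1 / (INR (n + 1)) ^ 3).

Definition term (m k : nat) : R :=
  1 / (2 ^ (k + m) * (2 * INR k - 1) * INR k ^ m * (2 * INR k + 1)).

From Stdlib Require Import Reals Lra Lia.
From Coquelicot Require Import Coquelicot.
Open Scope R_scope.

(* Partial fractions reduce the three series to sums of 2^-k/(2k-1), 2^-k/(2k+1) and the
   polylogarithm values Li_1(1/2), Li_2(1/2), Li_3(1/2).  The first two come from the Taylor
   series of Li_1(x) - Li_1(-x) = ln((1+x)/(1-x)) at x = 1/sqrt 2.  The polylogarithm values
   follow from the identities, valid on [1/2, 1],
     Li_2(1-x) + Li_2(1-1/x) = -ln^2 x / 2,
     Li_3(x) + Li_3(1-x) + Li_3(1-1/x) = zeta(3) + ln^3 x / 6 + pi^2/6 ln x - ln^2 x ln(1-x) / 2,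
   proved by differentiating (x Li_(s+1)'(x) = Li_s(x), together with the reflection formula
   Li_2(x) + Li_2(1-x) = pi^2/6 - ln x ln(1-x)) and reaching the endpoints by continuity of
   Li_s on [-1, 1] for s >= 2; at x = 1/2 they involve Li_s(-1) = -(1 - 2^(1-s)) zeta(s) and
   zeta(2) = pi^2/6.  The latter comes from the duplication formula
   csc^2(y/2) + csc^2((y+pi)/2) = 4 csc^2 y, which gives
   sum_(k < 2^m) csc^2((2k+1) pi / 2^(m+2)) = 2 * 4^m, squeezed by 1/y^2 < csc^2 y < 1/y^2 + 1. *)

Fixpoint psum (a : nat -> R) (n : nat) : R :=
  match n with O => 0 | S m => psum a m + a m end.

Lemma psum_ext a b n : (forall k, (k < n)%nat -> a k = b k) -> psum a n = psum b n.
Proof.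
  induction n as [|n IH]; intros H; simpl; [reflexivity|].
  rewrite IH by (intros; apply H; lia). rewrite H by lia. reflexivity.
Qed.

Lemma psum_plus a b n : psum (fun k => a k + b k) n = psum a n + psum b n.
Proof. induction n as [|n IH]; simpl; [lra|rewrite IH; lra]. Qed.

Lemma psum_scal c a n : psum (fun k => c * a k) n = c * psum a n.
Proof. induction n as [|n IH]; simpl; [lra|rewrite IH; lra]. Qed.

Lemma psum_const c n : psum (fun _ => c) n = INR n * c.
Proof. induction n as [|n IH]; [simpl; lra|rewrite S_INR; simpl; rewrite IH; lra]. Qed.

Lemma psum_add a m n : psum a (m + n) = psum a m + psum (fun k => a (m + k)%nat) n.
Proof.
  induction n as [|n IH]; simpl; [rewrite Nat.add_0_r; lra|].
  rewrite Nat.add_succ_r; simpl; rewrite IH; lra.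
Qed.

Lemma psum_le a b n : (forall k, (k < n)%nat -> a k <= b k) -> psum a n <= psum b n.
Proof.
  induction n as [|n IH]; intros H; simpl; [lra|].
  assert (psum a n <= psum b n) by (apply IH; intros; apply H; lia).
  assert (a n <= b n) by (apply H; lia). lra.
Qed.

Lemma psum_rev a n : psum a n = psum (fun k => a (n - 1 - k)%nat) n.
Proof.
  induction n as [|n IH]; [reflexivity|].
  assert (Hfirst : forall b, psum b (S n) = b O + psum (fun k => b (S k)) n).
  { intros b. change (S n) with (1 + n)%nat. rewrite psum_add. simpl. lra. }
  rewrite (Hfirst (fun k => a (S n - 1 - k)%nat)). simpl psum. rewrite IH.
  replace (S n - 1 - 0)%nat with n by lia.
  rewrite (psum_ext (fun k => a (n - 0 - S k)%nat) (fun k => a (n - 1 - k)%nat)); [lra|].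
  intros k Hk; f_equal; lia.
Qed.

Lemma psum_even_odd a n :
  psum a (2 * n) = psum (fun k => a (2 * k)%nat) n + psum (fun k => a (2 * k + 1)%nat) n.
Proof.
  induction n as [|n IH]; [simpl; lra|].
  replace (2 * S n)%nat with (S (S (2 * n))) by lia.
  cbn [psum]. rewrite IH; replace (2 * n + 1)%nat with (S (2 * n)) by lia; lra.
Qed.

Lemma is_series_psum (a : nat -> R) (l : R) : is_series a l <-> is_lim_seq (psum a) l.
Proof.
  assert (E : forall n, sum_n a n = psum a (S n)).
  { induction n as [|n IH]; [rewrite sum_O; simpl; lra|].
    rewrite sum_Sn, IH; simpl; unfold plus; simpl; lra. }
  split; intros H.
  - apply is_lim_seq_incr_1, (is_lim_seq_ext (sum_n a)); [exact E|exact H].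
  - apply is_lim_seq_incr_1, (is_lim_seq_ext _ (sum_n a)) in H; [exact H|].
    intros; symmetry; apply E.
Qed.

Lemma is_lim_seq_nondecr_subseq (u : nat -> R) (phi : nat -> nat) (l : Rbar) :
  (forall n, u n <= u (S n)) -> filterlim phi eventually eventually ->
  is_lim_seq (fun n => u (phi n)) l -> is_lim_seq u l.
Proof.
  intros Hu Hphi Hl.
  destruct (ex_lim_seq_incr u Hu) as [l' Hl'].
  apply is_lim_seq_unique in Hl.
  assert (Hsub := is_lim_seq_subseq _ _ _ Hphi Hl').
  apply is_lim_seq_unique in Hsub.
  replace l with l' by congruence. exact Hl'.
Qed.

(** * The Basel problem *)

Definition csc2 (y : R) : R := / sin y ^ 2.

Lemma csc2_duplication y : 0 < y < PI -> csc2 (y / 2) + csc2 (y / 2 + PI / 2) = 4 * csc2 y.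
Proof.
  intros Hy. unfold csc2.
  assert (Hs : 0 < sin (y / 2)) by (apply sin_gt_0; lra).
  assert (Hc : 0 < cos (y / 2)) by (apply cos_gt_0; lra).
  assert (Hsy : sin y = 2 * sin (y / 2) * cos (y / 2)) by (rewrite <- sin_2a; f_equal; field).
  assert (Hpyth : sin (y / 2) ^ 2 + cos (y / 2) ^ 2 = 1).
  { pose proof (sin2_cos2 (y / 2)) as Hq. unfold Rsqr in Hq. lra. }
  rewrite sin_plus, sin_PI2, cos_PI2, Hsy.
  field_simplify; [|lra|lra]. rewrite Hpyth. field; lra.
Qed.

Lemma psum_csc2_dyadic n x : 0 < x < PI ->
  psum (fun k => csc2 ((x + INR k * PI) / 2 ^ n)) (2 ^ n) = 4 ^ n * csc2 x.
Proof.
  revert x. induction n as [|n IH]; intros x Hx.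
  - simpl. rewrite Rmult_0_l, Rplus_0_r, Rdiv_1_r. lra.
  - replace (2 ^ S n)%nat with (2 ^ n + 2 ^ n)%nat by (simpl; lia).
    (* The k-th and (2^n + k)-th points are y/2 and y/2 + pi/2 with y = (x + k pi) / 2^n. *)
    rewrite psum_add, <- psum_plus.
    rewrite (psum_ext _ (fun k => 4 * csc2 ((x + INR k * PI) / 2 ^ n))).
    { rewrite psum_scal, IH by exact Hx. simpl. ring. }
    intros k Hk.
    assert (Hk' : INR k + 1 <= 2 ^ n).
    { rewrite <- S_INR, <- (pow_INR 2). apply le_INR. lia. }
    assert (Hp : 0 < 2 ^ n) by (apply pow_lt; lra).
    pose proof (pos_INR k). pose proof PI_RGT_0.
    rewrite <- csc2_duplication.
    + rewrite plus_INR, pow_INR. replace (INR 2) with 2 by (simpl; lra).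
      f_equal; f_equal; simpl; field; lra.
    + split; [apply Rdiv_lt_0_compat; nra|].
      apply Rmult_lt_reg_r with (2 ^ n); [lra|].
      unfold Rdiv. rewrite Rmult_assoc, Rinv_l by lra. nra.
Qed.

Lemma psum_csc2_odd_multiples m :
  psum (fun k => csc2 ((2 * INR k + 1) * PI / (4 * 2 ^ m))) (2 ^ m) = 2 * 4 ^ m.
Proof.
  pose proof PI_RGT_0.
  assert (Hp : 0 < 2 ^ m) by (apply pow_lt; lra).
  set (g := fun k => csc2 ((PI / 2 + INR k * PI) / 2 ^ S m)).
  assert (Hall := psum_csc2_dyadic (S m) (PI / 2) ltac:(lra)).
  fold g in Hall. unfold csc2 in Hall. rewrite sin_PI2 in Hall.
  replace (2 ^ S m)%nat with (2 ^ m + 2 ^ m)%nat in Hall by (simpl; lia).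
  rewrite psum_add in Hall.
  (* sin (PI - y) = sin y makes the second half of the points the mirror image of the first. *)
  assert (Hsym : psum (fun k => g (2 ^ m + k)%nat) (2 ^ m) = psum g (2 ^ m)).
  { rewrite (psum_rev g).
    apply psum_ext. intros k Hk. unfold g, csc2. rewrite <- sin_PI_x.
    do 3 f_equal.
    rewrite plus_INR, (minus_INR (2 ^ m - 1) k), (minus_INR (2 ^ m) 1) by
      (pose proof (Nat.pow_gt_lin_r 2 m); lia).
    rewrite !pow_INR. replace (INR 2) with 2 by (simpl; lra). simpl. field. lra. }
  rewrite Hsym in Hall.
  rewrite (psum_ext _ g).
  - simpl in Hall. lra.
  - intros k _. unfold g. f_equal. simpl. field. lra.
Qed.

Lemma xcos_lt_sin y : 0 < y <= PI / 2 -> y * cos y < sin y.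
Proof.
  intros Hy. pose proof PI2_1.
  pose (pr := derivable_minus _ _ derivable_sin (derivable_mult _ _ derivable_id derivable_cos)).
  assert (Hd : forall t, 0 < t < PI / 2 -> 0 < derive_pt (sin - id * cos)%F t (pr t)).
  { intros t Ht.
    rewrite (derive_pt_eq_0 _ _ (t * sin t) (pr t)).
    - assert (0 < sin t) by (apply sin_gt_0; lra). nra.
    - apply is_derive_Reals. unfold minus_fct, mult_fct, id.
      auto_derive; [auto|ring]. }
  assert (Hincr := MVT.derive_increasing_interv 0 (PI / 2) _ pr ltac:(lra) Hd 0 y
                     ltac:(lra) ltac:(lra) ltac:(lra)).
  unfold minus_fct, mult_fct, id in Hincr. rewrite sin_0 in Hincr. lra.
Qed.

Lemma inv_sqr_lt_csc2 y : 0 < y <= PI / 2 -> / y ^ 2 < csc2 y.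
Proof.
  intros Hy. unfold csc2.
  assert (0 < sin y) by (apply sin_gt_0; pose proof PI_RGT_0; lra).
  pose proof (sin_lt_x y ltac:(lra)).
  apply Rinv_lt_contravar; [apply Rmult_lt_0_compat; apply pow_lt; lra|nra].
Qed.

Lemma csc2_lt_inv_sqr_add1 y : 0 < y <= PI / 2 -> csc2 y < / y ^ 2 + 1.
Proof.
  intros Hy. unfold csc2.
  assert (Hs : 0 < sin y) by (apply sin_gt_0; pose proof PI_RGT_0; lra).
  assert (Hc : 0 <= cos y) by (apply cos_ge_0; pose proof PI_RGT_0; lra).
  pose proof (xcos_lt_sin y Hy).
  assert (Hpyth : sin y ^ 2 + cos y ^ 2 = 1).
  { pose proof (sin2_cos2 y) as Hq. unfold Rsqr in Hq. lra. }
  enough (cos y ^ 2 / sin y ^ 2 < / y ^ 2).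
  { replace (/ sin y ^ 2) with (cos y ^ 2 / sin y ^ 2 + 1)
      by (replace (cos y ^ 2) with (1 - sin y ^ 2) by lra; field; lra). lra. }
  apply Rmult_lt_reg_r with (y ^ 2 * sin y ^ 2); [apply Rmult_lt_0_compat; apply pow_lt; lra|].
  field_simplify; try lra.
  assert (0 <= y * cos y) by (apply Rmult_le_pos; lra).
  nra.
Qed.

Definition odd_inv_sq (k : nat) : R := / (2 * INR k + 1) ^ 2.

Lemma psum_odd_inv_sq_dyadic m :
  PI ^ 2 / 8 - PI ^ 2 / 16 * (1 / 2) ^ m <= psum odd_inv_sq (2 ^ m) <= PI ^ 2 / 8.
Proof.
  pose proof PI_RGT_0.
  assert (HN : INR (2 ^ m) = 2 ^ m) by (rewrite pow_INR; f_equal; simpl; lra).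
  set (N := 2 ^ m) in HN |- *.
  assert (Hp : 0 < N) by (apply pow_lt; lra).
  set (y := fun k : nat => (2 * INR k + 1) * PI / (4 * N)).
  assert (Hy : forall k, (k < 2 ^ m)%nat -> 0 < y k <= PI / 2).
  { intros k Hk. unfold y.
    assert (INR k + 1 <= N) by (rewrite <- S_INR, <- HN; apply le_INR; lia).
    pose proof (pos_INR k). split; [apply Rdiv_lt_0_compat; nra|].
    apply Rmult_le_reg_r with (4 * N); [lra|].
    unfold Rdiv. rewrite Rmult_assoc, Rinv_l by lra. nra. }
  set (c := 16 * N ^ 2 / PI ^ 2).
  assert (Hc : 0 < c).
  { apply Rdiv_lt_0_compat; [apply Rmult_lt_0_compat; [lra|apply pow_lt; lra]|apply pow_lt; lra]. }
  assert (Hinv : psum (fun k => / y k ^ 2) (2 ^ m) = c * psum odd_inv_sq (2 ^ m)).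
  { rewrite <- psum_scal. apply psum_ext. intros k _. unfold y, c, odd_inv_sq.
    pose proof (pos_INR k). field. repeat split; lra. }
  assert (Hcsc : psum (fun k => csc2 (y k)) (2 ^ m) = 2 * N ^ 2).
  { unfold y, N. rewrite psum_csc2_odd_multiples, <- pow_mult, Nat.mul_comm, pow_mult.
    do 2 f_equal. lra. }
  assert (Hlo : psum (fun k => / y k ^ 2) (2 ^ m) <= psum (fun k => csc2 (y k)) (2 ^ m)).
  { apply psum_le. intros k Hk. left. apply inv_sqr_lt_csc2, Hy, Hk. }
  assert (Hhi : psum (fun k => csc2 (y k) + - 1) (2 ^ m) <= psum (fun k => / y k ^ 2) (2 ^ m)).
  { apply psum_le. intros k Hk. pose proof (csc2_lt_inv_sqr_add1 (y k) (Hy k Hk)). lra. }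
  rewrite psum_plus, psum_const, HN, Hcsc, Hinv in Hhi. rewrite Hcsc, Hinv in Hlo.
  assert (Ehalf : (1 / 2) ^ m = / N) by (unfold N; rewrite <- pow_inv; f_equal; lra).
  rewrite Ehalf.
  replace (PI ^ 2 / 8) with (2 * N ^ 2 / c) by (unfold c; field; lra).
  replace (2 * N ^ 2 / c - PI ^ 2 / 16 * / N) with ((2 * N ^ 2 - N) / c) by (unfold c; field; lra).
  split; apply Rmult_le_reg_r with c; try lra; unfold Rdiv; rewrite Rmult_assoc, Rinv_l; lra.
Qed.

Lemma is_series_odd_inv_sq : is_series odd_inv_sq (PI ^ 2 / 8).
Proof.
  apply is_series_psum, (is_lim_seq_nondecr_subseq _ (fun m => 2 ^ m)%nat).
  - intros n. simpl. unfold odd_inv_sq.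
    assert (0 < (2 * INR n + 1) ^ 2) by (apply pow_lt; pose proof (pos_INR n); lra).
    pose proof (Rinv_0_lt_compat _ H). lra.
  - apply eventually_subseq. intros n. simpl. pose proof (Nat.pow_gt_lin_r 2 n). lia.
  - apply is_lim_seq_le_le with (u := fun m => PI ^ 2 / 8 - PI ^ 2 / 16 * (1 / 2) ^ m)
                                (w := fun _ => PI ^ 2 / 8).
    + intros m. apply psum_odd_inv_sq_dyadic.
    + replace (Finite (PI ^ 2 / 8)) with (Finite (PI ^ 2 / 8 - PI ^ 2 / 16 * 0)) by (f_equal; ring).
      apply is_lim_seq_minus'; [apply is_lim_seq_const|].
      apply (is_lim_seq_scal_l _ _ 0), is_lim_seq_geom. rewrite Rabs_pos_eq; lra.
    + apply is_lim_seq_const.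
Qed.

Lemma ex_series_nonneg_le (a b : nat -> R) :
  (forall n, 0 <= a n <= b n) -> ex_series b -> ex_series a.
Proof.
  intros H Hb. apply (ex_series_le a b); [|exact Hb]. intros n.
  change (norm (a n)) with (Rabs (a n)). rewrite Rabs_pos_eq; apply H.
Qed.

Lemma is_lim_seq_psum_double (a : nat -> R) (l : R) :
  is_series a l -> is_lim_seq (fun N => psum a (2 * N)) l.
Proof.
  intros Ha. apply (is_lim_seq_subseq (psum a)), is_series_psum, Ha.
  apply eventually_subseq. intros n. lia.
Qed.

Lemma Series_eq_lim_psum_double (a f : nat -> R) (l : R) :
  ex_series a -> (forall N, psum a (2 * N) = f N) -> is_lim_seq f l -> Series a = l.
Proof.
  intros Ha Hf Hl.
  assert (H := is_lim_seq_psum_double _ _ (Series_correct _ Ha)).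
  apply (is_lim_seq_ext _ _ _ Hf), is_lim_seq_unique in H.
  apply is_lim_seq_unique in Hl. congruence.
Qed.

Lemma is_series_even_part (a : nat -> R) (l : R) :
  is_series a l -> (forall k, a (2 * k + 1)%nat = 0) -> is_series (fun k => a (2 * k)%nat) l.
Proof.
  intros Ha Hodd. apply is_series_psum.
  apply (is_lim_seq_ext (fun N => psum a (2 * N))); [|apply is_lim_seq_psum_double, Ha].
  intros N. rewrite psum_even_odd, (psum_ext (fun k => a (2 * k + 1)%nat) (fun _ => 0)), psum_const
    by (intros; apply Hodd).
  ring.
Qed.

Definition zeta_term (s n : nat) : R := / INR (S n) ^ s.

Lemma zeta_term_pos s n : 0 < zeta_term s n.
Proof. apply Rinv_0_lt_compat, pow_lt, lt_0_INR. lia. Qed.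

Lemma zeta_term_le_1 s n : zeta_term s n <= 1.
Proof.
  unfold zeta_term. rewrite <- Rinv_1. apply Rinv_le_contravar; [lra|].
  apply pow_R1_Rle. rewrite S_INR. pose proof (pos_INR n). lra.
Qed.

Lemma zeta_term_even k : zeta_term 2 (2 * k) = odd_inv_sq k.
Proof. unfold zeta_term, odd_inv_sq. rewrite S_INR, mult_INR. simpl. f_equal. Qed.

Lemma zeta_term_odd s k : zeta_term s (2 * k + 1) = / 2 ^ s * zeta_term s k.
Proof.
  unfold zeta_term. replace (INR (S (2 * k + 1))) with (2 * INR (S k))
    by (rewrite !S_INR, plus_INR, mult_INR; simpl; ring).
  rewrite Rpow_mult_distr, Rinv_mult. reflexivity.
Qed.

Lemma ex_series_zeta_term s : (2 <= s)%nat -> ex_series (zeta_term s).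
Proof.
  intros Hs.
  assert (H2 : ex_series (zeta_term 2)).
  { apply (ex_series_nonneg_le _ (fun n => 4 * odd_inv_sq n)).
    - intros n. pose proof (zeta_term_pos 2 n). split; [lra|].
      unfold zeta_term, odd_inv_sq. rewrite S_INR. pose proof (pos_INR n).
      replace (4 * / (2 * INR n + 1) ^ 2) with (/ ((2 * INR n + 1) ^ 2 / 4)) by (field; lra).
      apply Rinv_le_contravar; [apply Rdiv_lt_0_compat; [apply pow_lt|]; lra|nra].
    - eexists. apply (is_series_scal 4 odd_inv_sq), is_series_odd_inv_sq. }
  apply (ex_series_nonneg_le _ (zeta_term 2)); [|exact H2].
  intros n. pose proof (zeta_term_pos s n). split; [lra|].
  apply Rinv_le_contravar; [apply pow_lt, lt_0_INR; lia|].
  apply Rle_pow; [|exact Hs]. rewrite S_INR. pose proof (pos_INR n). lra.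
Qed.

Lemma is_series_zeta_term_2 : is_series (zeta_term 2) (PI ^ 2 / 6).
Proof.
  assert (Hex := ex_series_zeta_term 2 (le_n 2)).
  enough (Series (zeta_term 2) = PI ^ 2 / 6) as <- by apply Series_correct, Hex.
  assert (H := Series_eq_lim_psum_double (zeta_term 2)
                 (fun N => psum odd_inv_sq N + / 4 * psum (zeta_term 2) N)
                 (PI ^ 2 / 8 + / 4 * Series (zeta_term 2)) Hex).
  enough (Series (zeta_term 2) = PI ^ 2 / 8 + / 4 * Series (zeta_term 2)) by lra.
  apply H.
  - intros N. rewrite psum_even_odd, <- psum_scal. f_equal; apply psum_ext; intros k _.
    + apply zeta_term_even.
    + rewrite zeta_term_odd. f_equal. simpl. field.
  - apply is_lim_seq_plus'.
    + apply is_series_psum, is_series_odd_inv_sq.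
    + apply (is_lim_seq_scal_l _ _ (Series (zeta_term 2))), is_series_psum, Series_correct, Hex.
Qed.

Lemma is_series_alt_zeta_term s : (2 <= s)%nat ->
  is_series (fun n => (-1) ^ S n * zeta_term s n) (- (1 - 2 / 2 ^ s) * Series (zeta_term s)).
Proof.
  intros Hs. set (a := fun n => (-1) ^ S n * zeta_term s n).
  assert (HZ := ex_series_zeta_term s Hs). set (Z := Series (zeta_term s)).
  assert (Ha : ex_series a).
  { apply ex_series_Rabs, (ex_series_nonneg_le _ (zeta_term s)); [|exact HZ].
    intros n. unfold a. rewrite Rabs_mult, <- RPow_abs, Rabs_m1, pow1, Rabs_pos_eq.
    - pose proof (zeta_term_pos s n). split; lra.
    - left; apply zeta_term_pos. }
  enough (Series a = - Z + 2 / 2 ^ s * Z) as Ea.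
  { replace (- (1 - 2 / 2 ^ s) * Z) with (Series a) by (rewrite Ea; ring).
    apply Series_correct, Ha. }
  apply (Series_eq_lim_psum_double a (fun N => - psum (zeta_term s) (2 * N)
                                               + 2 / 2 ^ s * psum (zeta_term s) N) _ Ha).
  - intros N. rewrite !psum_even_odd.
    rewrite (psum_ext (fun k => a (2 * k)%nat) (fun k => -1 * zeta_term s (2 * k)%nat)).
    2:{ intros k _. unfold a. rewrite pow_1_odd. reflexivity. }
    rewrite (psum_ext (fun k => a (2 * k + 1)%nat) (fun k => / 2 ^ s * zeta_term s k)).
    2:{ intros k _. unfold a. rewrite zeta_term_odd.
        replace (S (2 * k + 1)) with (2 * S k)%nat by lia. rewrite pow_1_even. ring. }
    rewrite (psum_ext (fun k => zeta_term s (2 * k + 1)%nat) (fun k => / 2 ^ s * zeta_term s k)).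
    2:{ intros k _. apply zeta_term_odd. }
    rewrite !psum_scal. field. apply pow_nonzero. lra.
  - apply is_lim_seq_plus'.
    + apply (is_lim_seq_ext (fun N => -1 * psum (zeta_term s) (2 * N))); [intros; ring|].
      replace (- Z) with (-1 * Z) by ring.
      apply (is_lim_seq_scal_l _ _ Z), is_lim_seq_psum_double, Series_correct, HZ.
    + apply (is_lim_seq_scal_l _ _ Z), is_series_psum, Series_correct, HZ.
Qed.

Lemma Series_zeta_term_3 : Series (zeta_term 3) = zeta3.
Proof.
  apply Series_ext. intros n. unfold zeta_term. rewrite Nat.add_1_r. field.
  apply not_0_INR. lia.
Qed.

Lemma limit1_in_weaken f D D' l x0 :
  (forall x, D' x -> D x) -> limit1_in f D l x0 -> limit1_in f D' l x0.
Proof.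
  intros HD Hf eps He. destruct (Hf eps He) as [d [Hd Hx]].
  exists d. split; [exact Hd|]. intros x [Dx Hxd]. apply Hx. split; [apply HD|]; assumption.
Qed.

Lemma limit1_in_ex_derive f D x0 : ex_derive f x0 -> limit1_in f D (f x0) x0.
Proof.
  intros H eps He.
  assert (Hc : continuity_pt f x0) by apply continuity_pt_filterlim, (ex_derive_continuous f x0 H).
  destruct (Hc eps He) as [d [Hd Hx]]. exists d. split; [exact Hd|].
  intros x [_ Hxd]. destruct (Req_dec x x0) as [->|Hne].
  - simpl. unfold Rdist. rewrite Rminus_eq_0, Rabs_R0. exact He.
  - apply (Hx x). split; [split; [exact I|auto]|exact Hxd].
Qed.

Lemma limit1_in_comp f g (Df Dg : R -> Prop) x0 :
  limit1_in f Df (f x0) x0 -> limit1_in g Dg (g (f x0)) (f x0) ->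
  (forall x, Df x -> Dg (f x)) -> limit1_in (fun x => g (f x)) Df (g (f x0)) x0.
Proof.
  intros Hf Hg HD. apply (limit1_in_weaken _ (Dgf Df Dg f)).
  - intros x Dx. split; [exact Dx|apply HD, Dx].
  - exact (limit_comp f g Df Dg _ _ x0 Hf Hg).
Qed.

Lemma limit1_in_unif (F : R -> R) (Fn : nat -> R -> R) (D : R -> Prop) x0 : D x0 ->
  (forall N, limit1_in (Fn N) D (Fn N x0) x0) ->
  (forall eps, 0 < eps -> exists N, forall y, D y -> Rabs (F y - Fn N y) < eps) ->
  limit1_in F D (F x0) x0.
Proof.
  intros Dx0 Hn Hunif eps He.
  destruct (Hunif (eps / 3) ltac:(lra)) as [N HN].
  destruct (Hn N (eps / 3) ltac:(lra)) as [d [Hd H]].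
  exists d. split; [exact Hd|]. intros x [Dx Hxd].
  specialize (H x (conj Dx Hxd)). cbn [dist R_met] in *. unfold Rdist in *.
  assert (Hx := HN x Dx). assert (Hx0 := HN x0 Dx0).
  replace (F x - F x0) with ((F x - Fn N x) + (Fn N x - Fn N x0) - (F x0 - Fn N x0)) by ring.
  revert H Hx Hx0. generalize (F x - Fn N x) (Fn N x - Fn N x0) (F x0 - Fn N x0).
  intros a b c. unfold Rabs. repeat destruct Rcase_abs; lra.
Qed.

Lemma zero_derive_const_open F a b : (forall x, a < x < b -> is_derive F x 0) ->
  forall x y, a < x < b -> a < y < b -> F x = F y.
Proof.
  intros HF x y Hx Hy.
  assert (Hin : forall z, Rmin x y <= z <= Rmax x y -> a < z < b).
  { intros z Hz. split.
    - apply Rlt_le_trans with (Rmin x y); [apply Rmin_glb_lt|]; lra.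
    - apply Rle_lt_trans with (Rmax x y); [|apply Rmax_lub_lt]; lra. }
  destruct (MVT_gen F x y (fun _ => 0)) as [c [_ Hc]].
  - intros z Hz. apply HF, Hin. lra.
  - intros z Hz. apply continuity_pt_filterlim, (ex_derive_continuous F z).
    exists 0. apply HF, Hin, Hz.
  - lra.
Qed.

Lemma adhDa_open_interval_endpoints a b :
  a < b -> adhDa (fun x => a < x < b) a /\ adhDa (fun x => a < x < b) b.
Proof.
  intros Hab. split; intros d Hd; unfold Rdist;
    pose proof (Rmin_l d (b - a)); pose proof (Rmin_r d (b - a));
    assert (0 < Rmin d (b - a)) by (apply Rmin_pos; lra).
  - exists (a + Rmin d (b - a) / 2). split; [lra|]. rewrite Rabs_pos_eq; lra.
  - exists (b - Rmin d (b - a) / 2). split; [lra|]. rewrite Rabs_left; lra.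
Qed.

Lemma zero_derive_const_closed F a b : a < b ->
  (forall x, a < x < b -> is_derive F x 0) ->
  limit1_in F (fun x => a < x < b) (F a) a -> limit1_in F (fun x => a < x < b) (F b) b ->
  forall x y, a <= x <= b -> a <= y <= b -> F x = F y.
Proof.
  intros Hab HF Ha Hb.
  set (c := (a + b) / 2).
  assert (Hint : forall x, a < x < b -> F x = F c).
  { intros x Hx. apply (zero_derive_const_open F a b HF); unfold c; lra. }
  assert (Hlim_c : forall x0, limit1_in F (fun x => a < x < b) (F c) x0).
  { intros x0 eps He. exists 1. split; [lra|]. intros x [Hx _]. simpl. unfold Rdist.
    rewrite Hint, Rminus_eq_0, Rabs_R0 by exact Hx. exact He. }
  destruct (adhDa_open_interval_endpoints a b Hab) as [Hadh_a Hadh_b].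
  enough (Hc : forall x, a <= x <= b -> F x = F c)
    by (intros x y Hx Hy; rewrite (Hc x Hx), (Hc y Hy); reflexivity).
  intros x [[Hxa|Hxa] [Hxb|Hxb]].
  - apply Hint. lra.
  - subst x. exact (single_limit F _ _ _ b Hadh_b Hb (Hlim_c b)).
  - subst x. exact (single_limit F _ _ _ a Hadh_a Ha (Hlim_c a)).
  - lra.
Qed.

(** * Polylogarithms *)

(* [polylog s x] is Li_s(x) = sum_(n >= 1) x^n / n^s. *)
Definition polylog_coef (s n : nat) : R :=
  match n with O => 0 | S m => zeta_term s m end.

Definition polylog (s : nat) (x : R) : R := PSeries (polylog_coef s) x.

Lemma polylog_coef_bound s n : 0 <= polylog_coef s n <= 1.
Proof.
  destruct n as [|m]; simpl; [lra|].
  split; [left; apply zeta_term_pos|apply zeta_term_le_1].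
Qed.

Lemma polylog_term_bound s n x : Rabs x <= 1 -> Rabs (polylog_coef s n * x ^ n) <= polylog_coef s n.
Proof.
  intros Hx. pose proof (polylog_coef_bound s n).
  rewrite Rabs_mult, <- RPow_abs, (Rabs_pos_eq (polylog_coef s n)) by lra.
  rewrite <- (Rmult_1_r (polylog_coef s n)) at 2. apply Rmult_le_compat_l; [lra|].
  rewrite <- (pow1 n). apply pow_incr. split; [apply Rabs_pos|exact Hx].
Qed.

Lemma polylog_radius s x : Rabs x < 1 -> Rbar_lt (Rabs x) (CV_radius (polylog_coef s)).
Proof.
  intros Hx. apply Rbar_lt_le_trans with 1; [exact Hx|].
  apply (proj1 (CV_radius_bounded _)). exists 1. intros n.
  rewrite pow1, Rmult_1_r. pose proof (polylog_coef_bound s n). rewrite Rabs_pos_eq; lra.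
Qed.

Lemma ex_series_polylog_coef s : (2 <= s)%nat -> ex_series (polylog_coef s).
Proof. intros Hs. apply ex_series_incr_1, ex_series_zeta_term, Hs. Qed.

Lemma ex_series_polylog s x :
  Rabs x < 1 \/ (2 <= s)%nat /\ Rabs x <= 1 -> ex_series (fun n => polylog_coef s n * x ^ n).
Proof.
  intros [Hx|[Hs Hx]].
  - apply (ex_series_ext (fun n => scal (pow_n x n) (polylog_coef s n))).
    + intros n. rewrite pow_n_pow. apply Rmult_comm.
    + apply CV_radius_inside, polylog_radius, Hx.
  - apply ex_series_Rabs, (ex_series_nonneg_le _ (polylog_coef s)).
    + intros n. split; [apply Rabs_pos|apply polylog_term_bound, Hx].
    + apply ex_series_polylog_coef, Hs.
Qed.

Lemma is_series_polylog s x :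
  Rabs x < 1 \/ (2 <= s)%nat /\ Rabs x <= 1 ->
  is_series (fun n => x ^ S n * zeta_term s n) (polylog s x).
Proof.
  intros Hx. apply (is_series_ext (fun n => polylog_coef s (S n) * x ^ S n)).
  { intros n. apply Rmult_comm. }
  apply (is_series_incr_1 (fun n => polylog_coef s n * x ^ n)).
  simpl polylog_coef. unfold plus; simpl. rewrite Rmult_0_l, Rplus_0_r.
  apply Series_correct, ex_series_polylog, Hx.
Qed.

Lemma polylog_0 s : polylog s 0 = 0.
Proof. apply PSeries_0. Qed.

Lemma polylog_R1 s : (2 <= s)%nat -> polylog s 1 = Series (zeta_term s).
Proof.
  intros Hs. symmetry. apply is_series_unique.
  apply (is_series_ext (fun n => 1 ^ S n * zeta_term s n)).
  { intros n. rewrite pow1, Rmult_1_l. reflexivity. }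
  apply is_series_polylog. right. rewrite Rabs_R1. split; [exact Hs|lra].
Qed.

Lemma polylog_m1 s : (2 <= s)%nat -> polylog s (-1) = - (1 - 2 / 2 ^ s) * Series (zeta_term s).
Proof.
  intros Hs.
  assert (Hle : Rabs (-1) <= 1) by (rewrite Rabs_m1; lra).
  rewrite <- (is_series_unique _ _ (is_series_polylog s (-1) (or_intror (conj Hs Hle)))).
  apply is_series_unique, is_series_alt_zeta_term, Hs.
Qed.

Lemma polylog_derive_mul s x : Rabs x < 1 ->
  x * PSeries (PS_derive (polylog_coef (S s))) x = polylog s x.
Proof.
  intros Hx. rewrite <- PSeries_incr_1. apply PSeries_ext. intros [|m]; [reflexivity|].
  unfold PS_incr_1, PS_derive, polylog_coef, zeta_term.
  assert (0 < INR (S m)) by (apply lt_0_INR; lia).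
  rewrite <- tech_pow_Rmult. field. split; [apply pow_nonzero|]; lra.
Qed.

Lemma is_derive_polylog s x : Rabs x < 1 -> x <> 0 ->
  is_derive (polylog (S s)) x (polylog s x / x).
Proof.
  intros Hx Hx0. rewrite <- (polylog_derive_mul s x Hx).
  replace (x * PSeries (PS_derive (polylog_coef (S s))) x / x)
    with (PSeries (PS_derive (polylog_coef (S s))) x) by (field; exact Hx0).
  apply is_derive_PSeries, polylog_radius, Hx.
Qed.

Lemma is_derive_polylog1 x : Rabs x < 1 -> is_derive (polylog 1) x (/ (1 - x)).
Proof.
  intros Hx. replace (/ (1 - x)) with (PSeries (PS_derive (polylog_coef 1)) x).
  - apply is_derive_PSeries, polylog_radius, Hx.
  - rewrite (PSeries_ext _ (fun _ => 1)).
    + apply is_series_unique, (is_series_ext (fun n => x ^ n)); [intros n; simpl; ring|].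
      apply is_series_geom, Hx.
    + intros n. unfold PS_derive, polylog_coef, zeta_term.
      assert (0 < INR (S n)) by (apply lt_0_INR; lia). field. lra.
Qed.

Lemma Derive_polylog s x : Rabs x < 1 -> x <> 0 ->
  Derive (fun t => polylog (S s) t) x = polylog s x / x.
Proof. intros Hx Hx0. apply is_derive_unique, is_derive_polylog; assumption. Qed.

Lemma Derive_polylog1 x : Rabs x < 1 -> Derive (fun t => polylog 1 t) x = / (1 - x).
Proof. intros Hx. apply is_derive_unique, is_derive_polylog1, Hx. Qed.

Lemma polylog1_ln x : Rabs x < 1 -> polylog 1 x = - ln (1 - x).
Proof.
  intros Hx. apply Rabs_def2 in Hx.
  enough (polylog 1 x + ln (1 - x) = polylog 1 0 + ln (1 - 0)) as E.
  { rewrite polylog_0, Rminus_0_r, ln_1 in E. lra. }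
  apply (zero_derive_const_open (fun y => polylog 1 y + ln (1 - y)) (-1) 1); [|lra|lra].
  intros y Hy. assert (Hy' : Rabs y < 1) by (apply Rabs_def1; lra).
  auto_derive.
  - repeat split; [exists (/ (1 - y)); apply is_derive_polylog1, Hy'|lra].
  - rewrite Derive_polylog1 by exact Hy'. field. lra.
Qed.

Lemma polylog_tail_bound s N y : (2 <= s)%nat -> Rabs y <= 1 ->
  Rabs (polylog s y - sum_f_R0 (fun n => polylog_coef s n * y ^ n) N)
  <= Series (polylog_coef s) - sum_f_R0 (polylog_coef s) N.
Proof.
  intros Hs Hy.
  set (a := fun n => polylog_coef s n * y ^ n).
  assert (Hc := ex_series_polylog_coef s Hs).
  assert (Habs : ex_series (fun n => Rabs (a n))).
  { apply (ex_series_nonneg_le _ (polylog_coef s)); [|exact Hc].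
    intros n. split; [apply Rabs_pos|apply polylog_term_bound, Hy]. }
  unfold polylog, PSeries. fold a.
  rewrite (Series_incr_n a (S N)), (Series_incr_n (polylog_coef s) (S N)) by
    (lia || exact Hc || apply ex_series_Rabs, Habs).
  simpl pred. ring_simplify (sum_f_R0 a N + Series (fun k => a (S N + k)%nat) - sum_f_R0 a N).
  ring_simplify (sum_f_R0 (polylog_coef s) N + Series (fun k => polylog_coef s (S N + k)%nat)
                 - sum_f_R0 (polylog_coef s) N).
  eapply Rle_trans; [apply Series_Rabs, (ex_series_incr_n (fun k => Rabs (a k))), Habs|].
  apply Series_le; [|apply (ex_series_incr_n (polylog_coef s)), Hc].
  intros k. split; [apply Rabs_pos|apply polylog_term_bound, Hy].
Qed.

Lemma limit1_in_polylog s x0 : (2 <= s)%nat -> -1 <= x0 <= 1 ->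
  limit1_in (polylog s) (fun y => -1 <= y <= 1) (polylog s x0) x0.
Proof.
  intros Hs Hx0.
  apply (limit1_in_unif _ (fun N y => sum_f_R0 (fun n => polylog_coef s n * y ^ n) N));
    [exact Hx0| |].
  - intros N. apply limit1_in_ex_derive.
    induction N as [|N IH]; simpl.
    + auto_derive. auto.
    + apply (ex_derive_plus (fun y => sum_f_R0 (fun n => polylog_coef s n * y ^ n) N));
        [exact IH|auto_derive; auto].
  - intros eps He.
    assert (Hlim : is_lim_seq (sum_n (polylog_coef s)) (Series (polylog_coef s)))
      by exact (Series_correct _ (ex_series_polylog_coef s Hs)).
    destruct (proj2 (is_lim_seq_spec _ _) Hlim (mkposreal eps He)) as [N HN]. simpl in HN.
    specialize (HN N (le_n N)). rewrite sum_n_Reals in HN.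
    exists N. intros y Hy.
    eapply Rle_lt_trans; [apply polylog_tail_bound; [exact Hs|apply Rabs_le, Hy]|].
    rewrite <- Rabs_Ropp in HN. eapply Rle_lt_trans; [apply Rle_abs|].
    replace (Series (polylog_coef s) - sum_f_R0 (polylog_coef s) N)
      with (- (sum_f_R0 (polylog_coef s) N - Series (polylog_coef s))) by ring. exact HN.
Qed.

Lemma limit1_in_polylog_comp s g (P : R -> Prop) x0 : (2 <= s)%nat ->
  ex_derive g x0 -> -1 <= g x0 <= 1 -> (forall x, P x -> -1 <= g x <= 1) ->
  limit1_in (fun x => polylog s (g x)) P (polylog s (g x0)) x0.
Proof.
  intros Hs Hg Hg0 HP. apply (limit1_in_comp g (polylog s) P (fun y => -1 <= y <= 1)).
  - apply limit1_in_ex_derive, Hg.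
  - apply limit1_in_polylog; assumption.
  - exact HP.
Qed.

(** * Dilogarithm and trilogarithm identities *)

Lemma inv_bounds_half_one x : 1 / 2 <= x <= 1 -> 1 <= / x <= 2.
Proof.
  intros Hx. assert (/ x * x = 1) by (field; lra).
  assert (0 < / x) by (apply Rinv_0_lt_compat; lra). nra.
Qed.

Lemma inv_bounds_half_one_strict x : 1 / 2 < x < 1 -> 1 < / x < 2.
Proof.
  intros Hx. assert (/ x * x = 1) by (field; lra).
  assert (0 < / x) by (apply Rinv_0_lt_compat; lra). nra.
Qed.

Lemma ln_half : ln (1 / 2) = - ln 2.
Proof. unfold Rdiv. rewrite Rmult_1_l, ln_Rinv by lra. reflexivity. Qed.

Lemma abs_lt_1 y : -1 < y < 1 -> Rabs y < 1.
Proof. intros H. apply Rabs_def1; lra. Qed.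

Lemma polylog2_landen x : 1 / 2 <= x <= 1 ->
  polylog 2 (1 - x) + polylog 2 (1 - / x) + / 2 * ln x ^ 2 = 0.
Proof.
  intros Hx.
  set (F := fun x => polylog 2 (1 - x) + polylog 2 (1 - / x) + / 2 * ln x ^ 2).
  assert (HF : forall x, 1 / 2 < x < 1 -> is_derive F x 0).
  { intros y Hy. pose proof (inv_bounds_half_one_strict y Hy).
    assert (A1 : Rabs (1 + - y) < 1) by (apply abs_lt_1; lra).
    assert (A2 : Rabs (1 + - / y) < 1) by (apply abs_lt_1; lra).
    unfold F. auto_derive.
    - repeat split; try lra; eexists; apply is_derive_polylog; assumption || lra.
    - rewrite !Derive_polylog, !polylog1_ln by (assumption || lra).
      replace (1 - (1 + - y)) with y by ring.
      replace (1 - (1 + - / y)) with (/ y) by ring.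
      rewrite ln_Rinv by lra. field. lra. }
  assert (Hend : forall x0, 1 / 2 <= x0 <= 1 -> limit1_in F (fun x => 1 / 2 < x < 1) (F x0) x0).
  { intros x0 Hx0. pose proof (inv_bounds_half_one x0 Hx0). unfold F.
    apply limit_plus; [apply limit_plus|].
    - apply (limit1_in_polylog_comp 2 (fun x => 1 - x)); [lia|auto_derive; auto|lra|].
      intros z Hz. lra.
    - apply (limit1_in_polylog_comp 2 (fun x => 1 - / x)); [lia|auto_derive; lra|lra|].
      intros z Hz. pose proof (inv_bounds_half_one_strict z Hz). lra.
    - apply (limit1_in_ex_derive (fun x => / 2 * ln x ^ 2)). auto_derive. lra. }
  change (F x = 0).
  rewrite (zero_derive_const_closed F (1 / 2) 1 ltac:(lra) HF
             (Hend (1 / 2) ltac:(lra)) (Hend 1 ltac:(lra)) x 1 Hx ltac:(lra)).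
  unfold F. rewrite Rinv_1, Rminus_eq_0, polylog_0, ln_1. ring.
Qed.

Lemma polylog2_half : polylog 2 (1 / 2) = PI ^ 2 / 12 - ln 2 ^ 2 / 2.
Proof.
  assert (H := polylog2_landen (1 / 2) ltac:(lra)).
  replace (1 - 1 / 2) with (1 / 2) in H by field.
  replace (1 - / (1 / 2)) with (-1) in H by field.
  rewrite polylog_m1, (is_series_unique _ _ is_series_zeta_term_2), ln_half in H by lia.
  simpl in H. lra.
Qed.

Lemma polylog2_reflection x : 0 < x < 1 ->
  polylog 2 x + polylog 2 (1 - x) + ln x * ln (1 - x) = PI ^ 2 / 6.
Proof.
  intros Hx.
  set (F := fun y => polylog 2 y + polylog 2 (1 - y) + ln y * ln (1 - y)).
  assert (HF : forall y, 0 < y < 1 -> is_derive F y 0).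
  { intros y Hy.
    assert (A0 : Rabs y < 1) by (apply abs_lt_1; lra).
    assert (A1 : Rabs (1 + - y) < 1) by (apply abs_lt_1; lra).
    unfold F. auto_derive.
    - repeat split; try lra; eexists; apply is_derive_polylog; assumption || lra.
    - rewrite !Derive_polylog, !polylog1_ln by (assumption || lra).
      replace (1 - (1 + - y)) with y by ring.
      change (1 - y) with (1 + - y). field. lra. }
  change (F x = PI ^ 2 / 6).
  rewrite (zero_derive_const_open F 0 1 HF x (1 / 2) Hx ltac:(lra)).
  unfold F. replace (1 - 1 / 2) with (1 / 2) by field.
  rewrite polylog2_half, ln_half. field.
Qed.

Definition trilog_combination (x : R) : R :=
  polylog 3 x + polylog 3 (1 - x) + polylog 3 (1 - / x)
  + (- ln x ^ 3 / 6 - PI ^ 2 / 6 * ln x) + / 2 * ln x ^ 2 * ln (1 - x).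

Lemma is_derive_trilog_combination x : 1 / 2 < x < 1 -> is_derive trilog_combination x 0.
Proof.
  intros Hx. pose proof (inv_bounds_half_one_strict x Hx).
  assert (A0 : Rabs x < 1) by (apply abs_lt_1; lra).
  assert (A1 : Rabs (1 + - x) < 1) by (apply abs_lt_1; lra).
  assert (A2 : Rabs (1 + - / x) < 1) by (apply abs_lt_1; lra).
  assert (Hlanden := polylog2_landen x ltac:(lra)).
  assert (Hrefl := polylog2_reflection x ltac:(lra)).
  change (1 - x) with (1 + - x) in Hlanden, Hrefl. change (1 - / x) with (1 + - / x) in Hlanden.
  unfold trilog_combination. auto_derive.
  - repeat split; try lra; eexists; apply is_derive_polylog; assumption || lra.
  - rewrite !Derive_polylog by (assumption || lra).
    replace (polylog 2 (1 + - / x)) with (- polylog 2 (1 + - x) - / 2 * ln x ^ 2) by lra.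
    replace (polylog 2 x) with (PI ^ 2 / 6 - polylog 2 (1 + - x) - ln x * ln (1 + - x)) by lra.
    field. lra.
Qed.

Lemma ln_le_sub_1 y : 0 < y -> ln y <= y - 1.
Proof. intros Hy. pose proof (exp_ineq1_le (ln y)). rewrite exp_ln in H by exact Hy. lra. Qed.

Lemma ln_sq_mul_ln_one_sub_bound x : 1 / 2 < x < 1 ->
  Rabs (/ 2 * ln x ^ 2 * ln (1 - x)) <= 2 * (1 - x).
Proof.
  intros Hx.
  assert (Hlx : 0 <= - ln x <= 2 * (1 - x)).
  { pose proof (ln_le_sub_1 (/ x) ltac:(apply Rinv_0_lt_compat; lra)) as H.
    rewrite ln_Rinv in H by lra.
    assert (ln x < 0) by (rewrite <- ln_1; apply ln_increasing; lra).
    assert (/ x - 1 <= 2 * (1 - x)) by (assert (/ x * x = 1) by (field; lra); nra).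
    lra. }
  assert (Hl1x : 0 <= - ln (1 - x) * (1 - x) <= 1).
  { pose proof (ln_le_sub_1 (/ (1 - x)) ltac:(apply Rinv_0_lt_compat; lra)) as H.
    rewrite ln_Rinv in H by lra.
    assert (ln (1 - x) < 0) by (rewrite <- ln_1; apply ln_increasing; lra).
    assert (/ (1 - x) * (1 - x) = 1) by (field; lra). nra. }
  replace (/ 2 * ln x ^ 2 * ln (1 - x)) with (- (/ 2 * (- ln x) ^ 2 * (- ln (1 - x)))) by ring.
  rewrite Rabs_Ropp, Rabs_pos_eq
    by (apply Rmult_le_pos; [apply Rmult_le_pos; [lra|apply pow2_ge_0]|nra]).
  assert ((- ln x) ^ 2 <= 4 * (1 - x) ^ 2) by nra.
  assert (0 <= - ln (1 - x)) by nra.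
  assert (/ 2 * (- ln x) ^ 2 * (- ln (1 - x)) <= 2 * (1 - x) ^ 2 * (- ln (1 - x))) by nra.
  nra.
Qed.

Lemma limit1_in_trilog_combination x0 : x0 = 1 / 2 \/ x0 = 1 ->
  limit1_in trilog_combination (fun x => 1 / 2 < x < 1) (trilog_combination x0) x0.
Proof.
  intros Hx0.
  assert (Hx0' : 1 / 2 <= x0 <= 1) by lra. pose proof (inv_bounds_half_one x0 Hx0').
  unfold trilog_combination.
  apply limit_plus; [apply limit_plus; [apply limit_plus; [apply limit_plus|]|]|].
  - apply (limit1_in_polylog_comp 3 (fun x => x)); [lia|auto_derive; auto|lra|].
    intros z Hz. lra.
  - apply (limit1_in_polylog_comp 3 (fun x => 1 - x)); [lia|auto_derive; auto|lra|].
    intros z Hz. lra.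
  - apply (limit1_in_polylog_comp 3 (fun x => 1 - / x)); [lia|auto_derive; lra|lra|].
    intros z Hz. pose proof (inv_bounds_half_one_strict z Hz). lra.
  - apply (limit1_in_ex_derive (fun x => - ln x ^ 3 / 6 - PI ^ 2 / 6 * ln x)). auto_derive. lra.
  - destruct Hx0 as [->| ->].
    + apply (limit1_in_ex_derive (fun x => / 2 * ln x ^ 2 * ln (1 - x))). auto_derive. lra.
    + (* [ln (1 - 1)] is the junk value [ln 0], but it is multiplied by [ln 1 ^ 2 = 0]. *)
      intros eps He. exists (eps / 2). split; [lra|]. intros x [Hx Hd].
      cbn [dist R_met] in *. unfold Rdist in *.
      rewrite ln_1. replace (/ 2 * 0 ^ 2 * ln (1 - 1)) with 0 by ring. rewrite Rminus_0_r.
      eapply Rle_lt_trans; [apply ln_sq_mul_ln_one_sub_bound, Hx|].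
      rewrite Rabs_left in Hd by lra. lra.
Qed.

Lemma polylog3_half :
  polylog 3 (1 / 2) = 7 / 8 * Series (zeta_term 3) + ln 2 ^ 3 / 6 - PI ^ 2 / 12 * ln 2.
Proof.
  assert (E := zero_derive_const_closed trilog_combination (1 / 2) 1 ltac:(lra)
                 is_derive_trilog_combination
                 (limit1_in_trilog_combination (1 / 2) (or_introl eq_refl))
                 (limit1_in_trilog_combination 1 (or_intror eq_refl))
                 (1 / 2) 1 ltac:(lra) ltac:(lra)).
  unfold trilog_combination in E.
  rewrite Rinv_1, Rminus_eq_0, polylog_0, ln_1, polylog_R1 in E by lia.
  replace (1 - 1 / 2) with (1 / 2) in E by field.
  replace (1 - / (1 / 2)) with (-1) in E by field.
  rewrite polylog_m1, ln_half in E by lia.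
  simpl in E. lra.
Qed.

Lemma sqrt2_sqr : sqrt 2 * sqrt 2 = 2.
Proof. apply sqrt_sqrt. lra. Qed.

Lemma sqrt2_gt_1 : 1 < sqrt 2.
Proof. rewrite <- sqrt_1. apply sqrt_lt_1; lra. Qed.

Definition half_pow_div_odd (n : nat) : R := (1 / 2) ^ n / (2 * INR n + 1).

Lemma is_series_half_pow_div_odd : is_series half_pow_div_odd (sqrt 2 * ln (1 + sqrt 2)).
Proof.
  pose proof sqrt2_sqr as Hs2. pose proof sqrt2_gt_1 as Hs1. set (s := sqrt 2) in *.
  set (y := s / 2).
  assert (Hy1 : Rabs y < 1) by (apply abs_lt_1; unfold y; nra).
  assert (Hy2 : Rabs (- y) < 1) by (apply abs_lt_1; unfold y; nra).
  assert (Hdiff := is_series_minus _ _ _ _ (is_series_polylog 1 y (or_introl Hy1))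
                     (is_series_polylog 1 (- y) (or_introl Hy2))).
  apply is_series_even_part in Hdiff.
  2:{ intros k. unfold minus, plus, opp; simpl.
      replace (k + (k + 0) + 1)%nat with (S (2 * k)) by lia.
      replace (- y) with (-1 * y) by ring. rewrite Rpow_mult_distr.
      rewrite pow_1_odd. ring. }
  apply (is_series_scal (/ (2 * y))) in Hdiff.
  unfold minus, plus, opp, scal in Hdiff; simpl in Hdiff; unfold mult in Hdiff; simpl in Hdiff.
  rewrite !polylog1_ln in Hdiff by assumption.
  eapply is_series_ext; [|replace (s * ln (1 + s)) with
    (/ (2 * y) * (- ln (1 - y) + - - ln (1 - - y))); [exact Hdiff|]].
  - intros n. cbv beta. change (NormedModule.sort _ _) with R.
    replace (n + (n + 0))%nat with (2 * n)%nat by lia.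
    replace (- y) with (-1 * y) by ring.
    rewrite Rpow_mult_distr, pow_1_even, pow_mult.
    replace (y ^ 2) with (1 / 2) by (unfold y; nra).
    unfold half_pow_div_odd, zeta_term. rewrite S_INR, mult_INR. simpl INR.
    pose proof (pos_INR n). field. unfold y. lra.
  - assert (Hln : ln (1 - - y) = ln (1 - y) + 2 * ln (1 + s)).
    { replace (1 - - y) with ((1 - y) * ((1 + s) * (1 + s))).
      - rewrite ln_mult, ln_mult by (unfold y; nra). ring.
      - unfold y. replace ((1 - s / 2) * ((1 + s) * (1 + s)))
          with (1 + s / 2 + (- (s / 2)) * (s * s - 2)) by field.
        rewrite Hs2. field. }
    rewrite Hln. unfold y. field_simplify_eq; [|lra].
    replace (s ^ 2) with (s * s) by ring. rewrite Hs2. reflexivity.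
Qed.

Lemma is_series_half_pow_div_odd_S :
  is_series (fun n => half_pow_div_odd (S n)) (sqrt 2 * ln (1 + sqrt 2) - 1).
Proof.
  apply (is_series_incr_1 half_pow_div_odd).
  unfold plus; simpl. replace (sqrt 2 * ln (1 + sqrt 2) - 1 + half_pow_div_odd 0)
    with (sqrt 2 * ln (1 + sqrt 2)) by (unfold half_pow_div_odd; simpl; field).
  exact is_series_half_pow_div_odd.
Qed.

Lemma polylog1_half : polylog 1 (1 / 2) = ln 2.
Proof.
  rewrite polylog1_ln by (apply abs_lt_1; lra).
  replace (1 - 1 / 2) with (1 / 2) by field. rewrite ln_half. ring.
Qed.

Lemma is_series_polylog_half s :
  is_series (fun n => (1 / 2) ^ S n * zeta_term s n) (polylog s (1 / 2)).
Proof. apply is_series_polylog. left. apply abs_lt_1. lra. Qed.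

Lemma is_series_lincomb2 (a b : nat -> R) (la lb x y : R) :
  is_series a la -> is_series b lb -> is_series (fun n => x * a n + y * b n) (x * la + y * lb).
Proof.
  intros Ha Hb. exact (is_series_plus _ _ _ _ (is_series_scal x _ _ Ha) (is_series_scal y _ _ Hb)).
Qed.

Lemma is_series_lincomb3 (a b c : nat -> R) (la lb lc x y z : R) :
  is_series a la -> is_series b lb -> is_series c lc ->
  is_series (fun n => x * a n + y * b n + z * c n) (x * la + y * lb + z * lc).
Proof.
  intros Ha Hb Hc.
  exact (is_series_plus _ _ _ _ (is_series_lincomb2 _ _ _ _ x y Ha Hb) (is_series_scal z _ _ Hc)).
Qed.

(* 1/((2k-1) k (2k+1)) = 1/(2k-1) + 1/(2k+1) - 1/k; dividing once more by k turns the
   bracket into 2/(2k-1) - 2/(2k+1) - 1/k^2, and twice more gives term 1 - 2^(-k-3)/k^3. *)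
Lemma term_1_split n : term 1 (n + 1) =
  / 4 * half_pow_div_odd n + / 2 * half_pow_div_odd (S n)
  + - / 2 * ((1 / 2) ^ S n * zeta_term 1 n).
Proof.
  unfold term, half_pow_div_odd, zeta_term.
  rewrite !Nat.add_1_r, !S_INR. replace (1 / 2) with (/ 2) by field. rewrite !pow_inv.
  simpl pow. pose proof (pos_INR n). assert (0 < 2 ^ n) by (apply pow_lt; lra).
  field. repeat split; lra.
Qed.

Lemma term_2_split n : term 2 (n + 1) =
  / 4 * half_pow_div_odd n + - / 2 * half_pow_div_odd (S n)
  + - / 4 * ((1 / 2) ^ S n * zeta_term 2 n).
Proof.
  unfold term, half_pow_div_odd, zeta_term.
  replace (n + 1 + 2)%nat with (S (S (S n))) by lia.
  rewrite !Nat.add_1_r, !S_INR. replace (1 / 2) with (/ 2) by field. rewrite !pow_inv.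
  simpl pow. pose proof (pos_INR n). assert (0 < 2 ^ n) by (apply pow_lt; lra).
  field. repeat split; lra.
Qed.

Lemma term_3_split n : term 3 (n + 1) = term 1 (n + 1) + - / 8 * ((1 / 2) ^ S n * zeta_term 3 n).
Proof.
  unfold term, zeta_term.
  replace (n + 1 + 3)%nat with (S (S (S (S n)))) by lia.
  replace (n + 1 + 1)%nat with (S (S n)) by lia.
  rewrite !Nat.add_1_r, !S_INR. replace (1 / 2) with (/ 2) by field. rewrite !pow_inv.
  simpl pow. pose proof (pos_INR n). assert (0 < 2 ^ n) by (apply pow_lt; lra).
  field. repeat split; lra.
Qed.

Lemma inv_2sqrt2 : 1 / (2 * sqrt 2) = sqrt 2 / 4.
Proof. pose proof sqrt2_sqr. pose proof sqrt2_gt_1. field_simplify_eq; lra. Qed.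

Theorem corollary4 :
  is_series (fun n : nat => term 1 (n + 1))
    (3 / (2 * sqrt 2) * ln (1 + sqrt 2) - 1 / 2 * (ln 2 + 1))
  /\
  is_series (fun n : nat => term 2 (n + 1))
    (1 / 2 + 1 / 8 * (ln 2) ^ 2 - PI ^ 2 / 48 - 1 / (2 * sqrt 2) * ln (1 + sqrt 2))
  /\
  is_series (fun n : nat => term 3 (n + 1))
    (3 / (2 * sqrt 2) * ln (1 + sqrt 2) + PI ^ 2 * ln 2 / 96
     - 1 / 2 * (ln 2 + 1) - (ln 2) ^ 3 / 48 - 7 / 64 * zeta3).
Proof.
  assert (H1 := is_series_lincomb3 _ _ _ _ _ _ (/ 4) (/ 2) (- / 2) is_series_half_pow_div_odd
                  is_series_half_pow_div_odd_S (is_series_polylog_half 1)).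
  assert (H2 := is_series_lincomb3 _ _ _ _ _ _ (/ 4) (- / 2) (- / 4) is_series_half_pow_div_odd
                  is_series_half_pow_div_odd_S (is_series_polylog_half 2)).
  apply (is_series_ext _ _ _ (fun n => eq_sym (term_1_split n))) in H1.
  apply (is_series_ext _ _ _ (fun n => eq_sym (term_2_split n))) in H2.
  assert (H3 := is_series_plus _ _ _ _ H1 (is_series_scal (- / 8) _ _ (is_series_polylog_half 3))).
  apply (is_series_ext _ _ _ (fun n => eq_sym (term_3_split n))) in H3.
  rewrite polylog1_half in H1, H3. rewrite polylog2_half in H2.
  rewrite polylog3_half, Series_zeta_term_3 in H3.
  replace (3 / (2 * sqrt 2)) with (3 * (1 / (2 * sqrt 2)))
    by (pose proof sqrt2_gt_1; field; lra).
  rewrite inv_2sqrt2.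
  split; [|split];
    [refine (@eq_ind R _ _ H1 _ _)|refine (@eq_ind R _ _ H2 _ _)|refine (@eq_ind R _ _ H3 _ _)];
    unfold plus, scal; simpl; unfold mult; simpl; field.
Qed.
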